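(* Let $\mathfrak{A}$ be a commutative $\mathbb{Q}$-algebra, $A$ a set of non-commutative letters, $\mathfrak{h}^1$ the non-commutative polynomial algebra over $\mathfrak{A}$ generated by $A$, and $\mathfrak{z}\subset\mathfrak{h}^1$ the $\mathfrak{A}$-submodule spanned by $A$, equipped with a commutative (not necessarily unital) $\mathfrak{A}$-algebra product $\circ$. Let $r$ be a variable and $\mathrm{S}^r$ the map on $\mathfrak{h}^1[r]$ described in the context. Then for any $a_1,a_2,\ldots,a_n\in\mathfrak{z}$, $$\mathrm{S}^r(a_1a_2\cdots a_n)=\sum_{i=1}^n r^{i-1}(a_1\circ a_2\circ\cdots\circ a_i)\,\mathrm{S}^r(a_{i+1}\cdots a_n).$$ In particular, for any positive integer $n$ and any $a\in\mathfrak{z}$, $$\mathrm{S}^r(a^n)=\sum_{i=1}^n r^{i-1}a^{\circ i}\,\mathrm{S}^r(a^{n-i}).$$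
   Context: The product $\circ$ on $\mathfrak{z}$ gives an action of $\mathfrak{z}$ on $\mathfrak{h}^1$ (and on $\mathfrak{h}^1[r]$, $r$-linearly) defined by $\mathfrak{A}$-linearity and the rules $a\circ 1_w=0$ and $a\circ(bw)=(a\circ b)w$ for $a,b\in A$ and any word $w$, where $1_w$ is the empty word. The map $\mathrm{S}^r$ is the $\mathfrak{A}[r]$-linear map on $\mathfrak{h}^1[r]$ determined by $\mathrm{S}^r(1_w)=1_w$ and $\mathrm{S}^r(aw)=a\,\mathrm{S}^r(w)+r\,a\circ\mathrm{S}^r(w)$ for all $a\in A$ and words $w$. Juxtaposition denotes the concatenation product of $\mathfrak{h}^1$; $a^n$ is the $n$-fold concatenation power ($a^0=1_w$), and $a^{\circ i}=a\circ\cdots\circ a$ ($i$ factors). *)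

From HB Require Import structures.
From mathcomp Require Import all_boot all_algebra.
From mathcomp Require Import finmap.
From mathcomp.multinomials Require Import monalg.
Set Implicit Arguments. Unset Strict Implicit. Unset Printing Implicit Defensive.
Import GRing.Theory.
Local Open Scope ring_scope.

(* Letters: A : choiceType.
   h1r  = frakA[r]<A>  = non-commutative polynomials in the letters A with
          coefficients in the polynomial ring {poly R} (variable r = 'X),
          i.e. h^1[r]; concatenation = ring product.
   Zsp  = the free frakA-module on A  (the space z), embedded into h1r by
          zemb. *)

Definition h1r (R : comAlgType rat) (A : choiceType) :=
  {malg {poly R}[{fmonom A}]}.

Definition Zsp (R : comAlgType rat) (A : choiceType) := {malg R[A]}.

Section Defs.
Variables (R : comAlgType rat) (A : choiceType).
Local Notation H := (h1r R A).
Local Notation Z := (Zsp R A).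

Definition letter (a : A) : H := << fmu a >>.

Definition word (w : seq A) : H := << FMonom w >>.

Definition zemb (x : Z) : H :=
  \sum_(a <- msupp x) (x@_a)%:P *: letter a.

Definition zact_word (circ : Z -> Z -> Z) (x : Z) (w : seq A) : H :=
  if w is b :: w' then zemb (circ x << b >>) * word w' else 0.

Definition zact (circ : Z -> Z -> Z) (x : Z) (f : H) : H :=
  \sum_(k <- msupp f) f@_k *: zact_word circ x (fmonom_val k).

Fixpoint Sr_word (circ : Z -> Z -> Z) (w : seq A) : H :=
  if w is a :: w' then
    letter a * Sr_word circ w' + 'X *: zact circ << a >> (Sr_word circ w')
  else 1.

Definition Sr (circ : Z -> Z -> Z) (f : H) : H :=
  \sum_(k <- msupp f) f@_k *: Sr_word circ (fmonom_val k).

Definition circ_list (circ : Z -> Z -> Z) (a : Z) (s : seq Z) : Z :=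
  foldl circ a s.

(* a^{o i} = a o ... o a  (i factors, i >= 1) *)
Definition circ_pow (circ : Z -> Z -> Z) (a : Z) (i : nat) : Z :=
  iter i.-1 (circ a) a.

End Defs.

(* Two rules drive the expansion.  For x in z and f in h^1[r],
   S^r(x f) = x S^r(f) + r x o S^r(f)   and   x o (y g) = (x o y) g;
   both are linear in x, f, y, g, so it is enough to check them on letters and
   words, where they are the defining recursions of S^r and of o.  Expanding
   S^r(a_1 ... a_n) with the first rule and the induction hypothesis, the second
   rule pushes a_1 o _ onto the first factor of every summand, which raises the
   power of r by one and, by associativity, turns a_2 o ... o a_i into
   a_1 o ... o a_i.  For a^n, commutativity identifies these products with a^{o i}. *)

From HB Require Import structures.
From mathcomp Require Import all_boot all_algebra.
From mathcomp Require Import finmap.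
From mathcomp.multinomials Require Import monalg.
Import GRing.Theory.
Set Implicit Arguments.
Unset Strict Implicit.
Unset Printing Implicit Defensive.
Local Open Scope ring_scope.

Section FoldlLaws.
Variables (T : Type) (op : T -> T -> T).

Lemma foldlA : associative op ->
  forall x y s, op x (foldl op y s) = foldl op (op x y) s.
Proof. by move=> opA x y s; elim: s y => [|z s IHs] y //=; rewrite IHs opA. Qed.

Lemma foldl_nseq x a i : foldl op x (nseq i a) = iter i (op^~ a) x.
Proof. by elim: i x => [|i IHi] x //=; rewrite IHi -iterSr. Qed.

End FoldlLaws.

Lemma linear_for_sum (R : pzRingType) (U : lmodType R) (V : zmodType)
    (s : GRing.Scale.law R V) (F : U -> V) : linear_for s F ->
  forall (I : Type) (r : seq I) (c : I -> R) (v : I -> U),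
  F (\sum_(i <- r) c i *: v i) = \sum_(i <- r) s (c i) (F (v i)).
Proof.
move=> linF I r c v; have F0 : F 0 = 0.
  by rewrite -[0 in LHS]subr0 (zmod_morphism_linear linF) subrr.
by elim: r => [|i r IHr]; rewrite ?big_nil // !big_cons linF IHr.
Qed.

(* Sr, zact and zemb are all of this form. *)
Section MalgLift.
Variables (K : choiceType) (G S : nzRingType) (V : lmodType S).
Variables (f : {rmorphism G -> S}) (phi : K -> V).

Definition malg_lift (g : {malg G[K]}) : V := \sum_(k <- msupp g) f g@_k *: phi k.

Lemma malg_liftEw (d : {fset K}) (g : {malg G[K]}) : (msupp g `<=` d)%fset ->
  malg_lift g = \sum_(k <- d) f g@_k *: phi k.
Proof.
move=> le_gd; apply: big_fset_incl => // k _ /mcoeff_outdom ->.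
by rewrite rmorph0 scale0r.
Qed.

Lemma malg_lift_is_linear : linear_for (f \; *:%R) malg_lift.
Proof.
move=> c g1 g2 /=.
have le_D : (msupp (c *: g1 + g2) `<=` msupp g1 `|` msupp g2)%fset.
  exact: fsubset_trans (msuppD_le _ _) (fsetSU _ (msuppZ_le _ _)).
rewrite (malg_liftEw le_D) (malg_liftEw (fsubsetUl _ (msupp g2))).
rewrite (malg_liftEw (fsubsetUr (msupp g1) _)) scaler_sumr -big_split.
by apply: eq_bigr => k _; rewrite mcoeffD mcoeffZ rmorphD rmorphM scalerDl scalerA.
Qed.

Lemma malg_liftU (c : G) (k : K) : malg_lift << c *g k >> = f c *: phi k.
Proof. by rewrite (malg_liftEw msuppU_le) big_seq_fset1 mcoeffUU. Qed.

End MalgLift.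

Lemma malg_scaleE (K : choiceType) (G : nzRingType) (g : {malg G[K]}) :
  g = \sum_(k <- msupp g) g@_k *: << k >>.
Proof.
rewrite {1}[g]monalgE; apply: eq_bigr => k _; apply/malgP => k'.
by rewrite mcoeffZ !mcoeffU mulr_natr.
Qed.

Lemma malg_scalerAr (K : monomType) (R : comNzRingType) (c : R)
    (g1 g2 : {malg R[K]}) :
  c *: (g1 * g2) = g1 * (c *: g2).
Proof.
have mulCr (h : {malg R[K]}) : h * c%:MP = c *: h.
  by rewrite malgM_def malgZ_def fgmulgU; apply: eq_bigr => k _; rewrite mulm1 mulrC.
by rewrite -!mulCr mulrA.
Qed.

Section WordBasis.
Variables (R : comAlgType rat) (A : choiceType).
Local Notation H := (h1r R A).

Lemma word_nil : word R [::] = 1 :> H.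
Proof. by rewrite /word -fmoneE. Qed.

Lemma letter_word (a : A) (w : seq A) :
  letter R a * word R w = word R (a :: w) :> H.
Proof.
by rewrite /letter /word malgM_def fgmulUU mulr1 fmuE; congr << _ >>; exact: fmmulE.
Qed.

Lemma word_expand (f : H) : f = \sum_(k <- msupp f) f@_k *: word R (fmonom_val k).
Proof. by rewrite {1}[f]malg_scaleE; apply: eq_bigr => k _; rewrite /word fmK. Qed.

Lemma zemb_is_linear : linear_for (polyC \; *:%R) (@zemb R A).
Proof. exact: (malg_lift_is_linear polyC). Qed.

End WordBasis.

Section SrLinear.
Variables (R : comAlgType rat) (A : choiceType) (circ : Zsp R A -> Zsp R A -> Zsp R A).

Lemma Sr_is_linear : linear (Sr circ).
Proof. exact: (malg_lift_is_linear idfun). Qed.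

Lemma zact_is_linear x : linear (zact circ x).
Proof. exact: (malg_lift_is_linear idfun). Qed.

End SrLinear.

HB.instance Definition _ (R : comAlgType rat) (A : choiceType)
    (circ : Zsp R A -> Zsp R A -> Zsp R A) :=
  GRing.isLinear.Build {poly R} (h1r R A) (h1r R A) *:%R
    (Sr circ) (Sr_is_linear circ).
HB.instance Definition _ (R : comAlgType rat) (A : choiceType)
    (circ : Zsp R A -> Zsp R A -> Zsp R A) x :=
  GRing.isLinear.Build {poly R} (h1r R A) (h1r R A) *:%R
    (zact circ x) (zact_is_linear circ x).

Section SrWords.
Variables (R : comAlgType rat) (A : choiceType) (circ : Zsp R A -> Zsp R A -> Zsp R A).
Local Notation H := (h1r R A).

Lemma Sr_word_eq (w : seq A) : Sr circ (word R w) = Sr_word circ w.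
Proof.
rewrite -[RHS]scale1r.
exact: (malg_liftU idfun (fun k => Sr_word circ (fmonom_val k)) 1 (FMonom w)).
Qed.

Lemma zact_word_eq x (w : seq A) : zact circ x (word R w) = zact_word circ x w.
Proof.
rewrite -[RHS]scale1r.
exact: (malg_liftU idfun (fun k => zact_word circ x (fmonom_val k)) 1 (FMonom w)).
Qed.

Lemma Sr1 : Sr circ 1 = 1.
Proof. by rewrite -[in LHS]word_nil Sr_word_eq. Qed.

Lemma zact1 x : zact circ x 1 = 0.
Proof. by rewrite -word_nil zact_word_eq. Qed.

Lemma Sr_letterM (a : A) (f : H) :
  Sr circ (letter R a * f)
  = letter R a * Sr circ f + 'X *: zact circ << a >> (Sr circ f).
Proof.
transitivity (\sum_(k <- msupp f) f@_k *: Sr_word circ (a :: fmonom_val k)).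
  rewrite {1}[f]word_expand mulr_sumr linear_sum; apply: eq_bigr => k _.
  by rewrite -malg_scalerAr letter_word linearZ /= Sr_word_eq.
(* zact unfolds to a sum, so a bare linear_sum would also fire on 'X *: _. *)
rewrite [Sr circ f]/Sr mulr_sumr [zact _ _ _]linear_sum scaler_sumr -big_split.
apply: eq_bigr => k _ /=.
by rewrite -malg_scalerAr linearZ /= scalerA mulrC -scalerA -scalerDr.
Qed.

Lemma zact_letterM x (b : A) (g : H) :
  zact circ x (letter R b * g) = zemb (circ x << b >>) * g.
Proof.
rewrite [g]word_expand !mulr_sumr linear_sum.
apply: eq_bigr => k _.
by rewrite -!malg_scalerAr letter_word linearZ /= zact_word_eq.
Qed.

End SrWords.

Section ZCirc.
Variables (R : comAlgType rat) (A : choiceType).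
Local Notation H := (h1r R A).
Local Notation Z := (Zsp R A).
Variables (circ : Z -> Z -> Z).
Hypothesis circ_linl :
  forall (c : R) (x y z : Z), circ (c *: x + y) z = c *: circ x z + circ y z.
Hypothesis circ_linr :
  forall (c : R) (x y z : Z), circ x (c *: y + z) = c *: circ x y + circ x z.

Lemma zact_word_linear_l (w : seq A) :
  linear_for (polyC \; *:%R) (zact_word circ ^~ w).
Proof.
move=> c x y; case: w => [|b w] /=; first by rewrite scaler0 addr0.
by rewrite circ_linl zemb_is_linear /= mulrDl scalerAl.
Qed.

Lemma zact_linear_l (f : H) : linear_for (polyC \; *:%R) (zact circ ^~ f).
Proof.
move=> c x y /=; rewrite scaler_sumr -big_split; apply: eq_bigr => k _ /=.
by rewrite zact_word_linear_l scalerDr !scalerA mulrC.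
Qed.

Lemma Sr_zembM (x : Z) (f : H) :
  Sr circ (zemb x * f) = zemb x * Sr circ f + 'X *: zact circ x (Sr circ f).
Proof.
rewrite {3}[x]malg_scaleE (linear_for_sum (zact_linear_l _)) /= /zemb.
rewrite !mulr_suml linear_sum scaler_sumr -big_split; apply: eq_bigr => a _ /=.
by rewrite -!scalerAl linearZ /= Sr_letterM scalerDr !scalerA mulrC.
Qed.

Lemma zact_zembM (x y : Z) (g : H) :
  zact circ x (zemb y * g) = zemb (circ x y) * g.
Proof.
rewrite {2}[y]malg_scaleE (linear_for_sum (circ_linr^~ x)) /=.
rewrite (linear_for_sum (@zemb_is_linear R A)) /= /zemb.
rewrite !mulr_suml linear_sum; apply: eq_bigr => b _ /=.
by rewrite -!scalerAl linearZ /= zact_letterM.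
Qed.

Lemma Sr_prod_zemb (circA : associative circ) (a1 : Z) (s : seq Z) :
  Sr circ (\prod_(x <- a1 :: s) zemb x)
  = \sum_(j < (size s).+1)
      'X^j *: (zemb (circ_list circ a1 (take j s))
               * Sr circ (\prod_(x <- drop j s) zemb x)).
Proof.
elim: s a1 => [|a2 s IHs] a1.
  by rewrite big_ord1 /= big_cons !big_nil Sr_zembM // Sr1 zact1 scaler0 addr0 scale1r.
rewrite big_cons Sr_zembM // big_ord_recl expr0 scale1r; congr (_ + _).
rewrite IHs [zact _ _ _]linear_sum scaler_sumr; apply: eq_bigr => j _.
by rewrite linearZ /= zact_zembM // scalerA -exprS /circ_list foldlA.
Qed.

Lemma Sr_zemb_exp (circC : commutative circ) (circA : associative circ)
    (n : nat) (a : Z) : (0 < n)%N ->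
  Sr circ (zemb a ^+ n)
  = \sum_(i < n)
      'X^i *: (zemb (circ_pow circ a i.+1) * Sr circ (zemb a ^+ (n - i.+1))).
Proof.
case: n => // n _.
have prod_nseq m : \prod_(x <- nseq m a) zemb x = zemb a ^+ m :> H.
  by rewrite big_nseq iter_mulr_1.
rewrite -prod_nseq /= Sr_prod_zemb // size_nseq; apply: eq_bigr => i _.
rewrite (take_nseq _ (ltnSE (ltn_ord i))) drop_nseq prod_nseq subSS.
by rewrite /circ_list /circ_pow foldl_nseq (eq_iter (circC^~ a)).
Qed.

End ZCirc.

Theorem lemma2p2 (R : comAlgType rat) (A : choiceType)
  (circ : Zsp R A -> Zsp R A -> Zsp R A)
  (circ_linl : forall (c : R) (x y z : Zsp R A),
      circ (c *: x + y) z = c *: circ x z + circ y z)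
  (circ_linr : forall (c : R) (x y z : Zsp R A),
      circ x (c *: y + z) = c *: circ x y + circ x z)
  (circC : forall x y : Zsp R A, circ x y = circ y x)
  (circA : forall x y z : Zsp R A, circ x (circ y z) = circ (circ x y) z) :
  (forall (a1 : Zsp R A) (s : seq (Zsp R A)),
      Sr circ (\prod_(x <- a1 :: s) zemb x)
      = \sum_(j < (size s).+1)
          'X^j *: (zemb (circ_list circ a1 (take j s))
                   * Sr circ (\prod_(x <- drop j s) zemb x)))
  /\
  (forall (n : nat) (a : Zsp R A), (0 < n)%N ->
      Sr circ (zemb a ^+ n)
      = \sum_(i < n)
          'X^i *: (zemb (circ_pow circ a i.+1) * Sr circ (zemb a ^+ (n - i.+1)))).
Proof.
by split=> [a1 s | n a]; [exact: Sr_prod_zemb | exact: Sr_zemb_exp].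
Qed.
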